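(* For $k\in\mathbb{Z}/(l+1)\mathbb{Z}$ and $0\le r\le l-1$, define $g_{k,r}=s_{k+r}s_{k+r-1}\cdots s_{k+1}\big(\alpha_k/f_k\big)$ (with $g_{k,0}=\alpha_k/f_k$). Then $g_{k,r}$ equals the continued fraction $$g_{k,r}=\cfrac{\alpha_k+\alpha_{k+1}+\cdots+\alpha_{k+r}}{f_k-\cfrac{\alpha_{k+1}+\cdots+\alpha_{k+r}}{f_{k+1}-\cfrac{\ddots}{\ddots-\cfrac{\alpha_{k+r}}{f_{k+r}}}}}.$$ Moreover the translation $T_1=\pi s_ls_{l-1}\cdots s_1$ acts by $$T_1(f_0)=f_1-g_{2,l-1}+g_{0,0},\qquad T_1(f_1)=f_2-g_{3,l-2},$$ $$T_1(f_j)=f_{j+1}-g_{j+2,\,l-1-j}+g_{j,\,l+1-j}\quad(2\le j\le l-1),\qquad T_1(f_l)=f_0+g_{l,1},$$ and $T_1(\alpha_0)=\alpha_0+\delta$, $T_1(\alpha_1)=\alpha_1-\delta$, $T_1(\alpha_j)=\alpha_j$ for $j\neq0,1$.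
   Context: Let $l\ge2$ and index by $\mathbb{Z}/(l+1)\mathbb{Z}$. Let $\mathbb{C}(\alpha;f)$ be the field of rational functions over $\mathbb{C}$ in independent variables $\alpha_0,\dots,\alpha_l,f_0,\dots,f_l$, and set $\delta=\alpha_0+\cdots+\alpha_l$. For each $i$, $s_i$ is the field automorphism with $s_i(\alpha_i)=-\alpha_i$, $s_i(\alpha_{i\pm1})=\alpha_{i\pm1}+\alpha_i$, $s_i(\alpha_j)=\alpha_j$ for $j\ne i,i\pm1$, $s_i(f_i)=f_i$, $s_i(f_{i+1})=f_{i+1}+\alpha_i/f_i$, $s_i(f_{i-1})=f_{i-1}-\alpha_i/f_i$, $s_i(f_j)=f_j$ for $j\neq i,i\pm1$; and $\pi$ is the automorphism with $\pi(\alpha_j)=\alpha_{j+1}$, $\pi(f_j)=f_{j+1}$. Products of automorphisms are compositions, $(gh)(x)=g(h(x))$. *)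

From HB Require Import structures.
From mathcomp Require Import all_boot all_order all_algebra.
From mathcomp Require Import fraction.
From mathcomp Require Import mpoly.
From mathcomp Require Import complex.
From mathcomp Require Import Rstruct.
From Stdlib Require Rdefinitions.

Unset Printing Implicit Defensive.
Import GRing.Theory.
Local Open Scope ring_scope.

Definition CC := (Rdefinitions.R)[i].

Section Tau.
Variable l : nat.

(* 2(l+1) indeterminates: index v < l+1 is alpha_v, index l+1+j is f_j. *)
Definition NV := (l.+1 + l.+1)%N.

Definition KF := {fraction {mpoly CC[NV]}}.

Definition var (v : nat) : KF := tofrac ('X_(inord v) : {mpoly CC[NV]}).

(* Indices live in Z/(l+1)Z: a nat index j is read modulo l+1. *)
Definition alpha (j : nat) : KF := var (j %% l.+1).
Definition fv (j : nat) : KF := var (l.+1 + j %% l.+1).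

Definition delta : KF := \sum_(i < l.+1) alpha i.

Definition subst (h : 'I_NV -> KF) (x : KF) : KF :=
  let r := repr x in
  mmap (fun c : CC => tofrac (c%:MP : {mpoly CC[NV]})) h (\n_r)
  / mmap (fun c : CC => tofrac (c%:MP : {mpoly CC[NV]})) h (\d_r).

Definition genimg (a' f' : nat -> KF) : 'I_NV -> KF :=
  fun v => if (v < l.+1)%N then a' v else f' (v - l.+1)%N.

Definition eqm (i j : nat) : bool := (i == j %[mod l.+1]).

Definition s_alpha (i j : nat) : KF :=
  if eqm j i then - alpha j
  else if eqm j i.+1 || eqm j (i + l)%N then alpha j + alpha i
  else alpha j.
Definition s_f (i j : nat) : KF :=
  if eqm j i then fv j
  else if eqm j i.+1 then fv j + alpha i / fv i
  else if eqm j (i + l)%N then fv j - alpha i / fv i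
  else fv j.
Definition s (i : nat) : KF -> KF := subst (genimg (s_alpha i) (s_f i)).

Definition pi : KF -> KF := subst (genimg (fun j => alpha j.+1) (fun j => fv j.+1)).

Fixpoint g (k r : nat) : KF :=
  match r with
  | 0 => alpha k / fv k
  | r'.+1 => s (k + r'.+1) (g k r')
  end.

Fixpoint cfrac (k r : nat) : KF :=
  match r with
  | 0 => alpha k / fv k
  | r'.+1 => (\sum_(i < r'.+2) alpha (k + i)) / (fv k - cfrac k.+1 r')
  end.

Fixpoint sprod (m : nat) (x : KF) : KF :=
  match m with
  | 0 => x
  | m'.+1 => s m'.+1 (sprod m' x)
  end.

Definition T1 (x : KF) : KF := pi (sprod l x).

End Tau.

From Pilot Require Import Defs.
From HB Require Import structures.
From mathcomp Require Import all_boot all_order all_algebra.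
From mathcomp Require Import fraction mpoly complex Rstruct.
From mathcomp Require Import ring zify.
Import GRing.Theory.
Local Open Scope ring_scope.

(* The maps s_i and pi substitute rational functions for the generators.  Each has
   a rational inverse (s_i is an involution, pi a cyclic shift), which makes
   evaluation at its image point injective on polynomials; so the substitution is
   well defined on fractions and is a field automorphism.  Everything then reduces
   to the action on generators: s_m moves a_j and f_j only for j = m - 1, m, m + 1,
   so each of s_{k+1}, ..., s_{k+r} adds one innermost level to the continued
   fraction, and T_1 is computed by following each generator through
   s_1, ..., s_l and the shift pi. *)

Lemma fraction_numden {R : idomainType} (x : {fraction R}) :
  x = tofrac (\n_(repr x)) / tofrac (\d_(repr x)).
Proof.
rewrite -{1}[x]reprK; unlock tofrac.
rewrite -[_^-1]FracField.pi_inv -[RHS]FracField.pi_mul /FracField.invf /FracField.mulf /=.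
rewrite !numden_Ratio ?oner_neq0 ?denom_ratioP //.
by rewrite mul1r mulr1 Ratio_numden.
Qed.

Lemma fraction_quotient {R : idomainType} (x : {fraction R}) :
  exists a b, b != 0 /\ x = tofrac a / tofrac b.
Proof. by exists (\n_(repr x)), (\d_(repr x)); rewrite -fraction_numden denom_ratioP. Qed.

Lemma sum_ord_split_ends {V : nmodType} {n} (F : nat -> V) : (2 <= n)%N ->
  \sum_(j < n.+1) F j = F 0%N + F 1%N + \sum_(2 <= j < n) F j + F n.
Proof.
move=> n_ge2; rewrite -(big_mkord xpredT F) big_ltn // big_ltn; last by lia.
by rewrite big_nat_recr /= ?addrA //; lia.
Qed.

Lemma mpolyX_neq0 {R : idomainType} {n} (i : 'I_n) : ('X_i : {mpoly R[n]}) != 0.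
Proof.
apply/eqP => X0; have := @mcoeffX n R U_(i)%MM U_(i)%MM.
by rewrite -/(mpolyX _ _) X0 mcoeff0 eqxx => /eqP; rewrite eq_sym oner_eq0.
Qed.

Section FractionSubstitution.
Context {R : idomainType} {n : nat}.
Local Notation P := {mpoly R[n]}.
Local Notation K := {fraction P}.

Definition const_frac : {rmorphism R -> K} := (@tofrac P \o @mpolyC n R)%FUN.

Definition feval (y : 'I_n -> K) : P -> K := mmap const_frac y.
HB.instance Definition _ y := GRing.RMorphism.copy (feval y) (mmap const_frac y).

Definition fsubst (h : 'I_n -> K) (x : K) : K :=
  feval h (\n_(repr x)) / feval h (\d_(repr x)).

Definition fvar (i : 'I_n) : K := tofrac 'X_i.

Lemma fevalX y i : feval y 'X_i = y i.
Proof. by rewrite /feval mmapX mmap1U. Qed.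

Lemma fevalC y c : feval y c%:MP = tofrac c%:MP.
Proof. by rewrite /feval mmapC. Qed.

Lemma eq_feval {y1 y2} p : y1 =1 y2 -> feval y1 p = feval y2 p.
Proof.
move=> y12; apply: eq_bigr => m _; congr (_ * _); exact: mmap1_eq.
Qed.

Lemma feval_fvar p : feval fvar p = tofrac p.
Proof.
elim/mpolyind: p => [|c m p _ _ IHp]; first by rewrite !rmorph0.
rewrite !rmorphD /= IHp -mul_mpolyC !rmorphM /= fevalC; congr (_ * _ + _).
rewrite /feval mmapX /mmap1 mpolyXE_id rmorph_prod; apply: eq_bigr => i _.
by rewrite rmorphXn.
Qed.

Section Homomorphism.
Context {h : 'I_n -> K}.
Hypothesis feval_eq0 : forall p, feval h p = 0 -> p = 0.

Lemma feval_neq0 p : p != 0 -> feval h p != 0.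
Proof. by apply: contra => /eqP /feval_eq0 ->. Qed.

Lemma fsubst_frac (a b : P) : b != 0 -> fsubst h (tofrac a / tofrac b) = feval h a / feval h b.
Proof.
move=> b0; rewrite /fsubst.
move: (fraction_numden (tofrac a / tofrac b)) (denom_ratioP (repr (tofrac a / tofrac b))).
move: (\n_ _) (\d_ _) => a' b' ab_a'b' b'0.
have cross : a * b' = a' * b.
  have tb : tofrac b != 0 by rewrite tofrac_eq0.
  apply/eqP; rewrite -tofrac_eq !rmorphM /= -[tofrac a](divfK tb).
  by rewrite ab_a'b' mulrAC divfK ?tofrac_eq0.
have := congr1 (feval h) cross; rewrite !rmorphM /= => E.
by apply/eqP; rewrite eqr_div ?feval_neq0 // -E eqxx.
Qed.

Lemma fsubst_tofrac p : fsubst h (tofrac p) = feval h p.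
Proof. by rewrite -[tofrac p]divr1 -tofrac1 fsubst_frac ?oner_neq0 // rmorph1 divr1. Qed.

Lemma fsubst_fvar i : fsubst h (fvar i) = h i.
Proof. by rewrite fsubst_tofrac fevalX. Qed.

Lemma fsubst_is_zmod_morphism : zmod_morphism (fsubst h).
Proof.
move=> x y.
have [a [b [b0 ->]]] := fraction_quotient x; have [a' [b' [b'0 ->]]] := fraction_quotient y.
have tb : tofrac b != 0 by rewrite tofrac_eq0.
have tb' : tofrac b' != 0 by rewrite tofrac_eq0.
have -> : tofrac a / tofrac b - tofrac a' / tofrac b' =
    tofrac (a * b' - a' * b) / tofrac (b * b').
  by rewrite -mulNr (addf_div _ _ tb tb') rmorphB !rmorphM /= mulNr.
rewrite !fsubst_frac ?mulf_neq0 // rmorphB !rmorphM /=.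
by rewrite -[in RHS]mulNr (addf_div _ _ (feval_neq0 _ b0) (feval_neq0 _ b'0)) mulNr.
Qed.

Lemma fsubst_is_monoid_morphism : monoid_morphism (fsubst h).
Proof.
split; first by rewrite -tofrac1 fsubst_tofrac rmorph1.
move=> x y.
have [a [b [b0 ->]]] := fraction_quotient x; have [a' [b' [b'0 ->]]] := fraction_quotient y.
have -> : tofrac a / tofrac b * (tofrac a' / tofrac b') = tofrac (a * a') / tofrac (b * b').
  by rewrite mulf_div !rmorphM.
by rewrite !fsubst_frac ?mulf_neq0 // !rmorphM mulf_div.
Qed.

End Homomorphism.

(* If every component of [A y] is a polynomial in [y] divided by [c(y)], then
   evaluation at [A y] becomes polynomial after clearing denominators; if moreover
   [A] sends some point [y0] to the generic point, evaluation at [A fvar] has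
   trivial kernel. *)
Section InvertibleSubstitution.
Context {A : ('I_n -> K) -> 'I_n -> K} {c : P}.
Hypothesis A_polynomial : forall v, exists q : P,
  forall y, feval y c != 0 -> feval y q = A y v * feval y c.

Lemma feval_clear_denominators p : exists (q : P) (N : nat),
  forall y, feval y c != 0 -> feval y q = feval (A y) p * feval y c ^+ N.
Proof.
pose cleared p := exists (q : P) (N : nat),
  forall y, feval y c != 0 -> feval y q = feval (A y) p * feval y c ^+ N.
have clearedC a : cleared a%:MP.
  by exists a%:MP, 0%N => y _; rewrite !fevalC mulr1.
have clearedD p1 p2 : cleared p1 -> cleared p2 -> cleared (p1 + p2).
  move=> [q1 [N1 e1]] [q2 [N2 e2]].
  exists (q1 * c ^+ N2 + q2 * c ^+ N1), (N1 + N2)%N => y cy.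
  by rewrite !rmorphD !rmorphM !rmorphXn /= e1 // e2 // exprD; ring.
have clearedM p1 p2 : cleared p1 -> cleared p2 -> cleared (p1 * p2).
  move=> [q1 [N1 e1]] [q2 [N2 e2]].
  exists (q1 * q2), (N1 + N2)%N => y cy.
  by rewrite !rmorphM /= e1 // e2 // exprD; ring.
have cleared1 : cleared 1 by rewrite -mpolyC1.
elim/mpolyind: p => [|a m p _ _ IHp]; first by rewrite -mpolyC0; exact: clearedC.
apply: (clearedD) => //; rewrite -mul_mpolyC; apply: (clearedM) => //.
rewrite mpolyXE_id; apply: (big_ind cleared) => // i _.
elim: (m i) => // k IHk.
have [q e] := A_polynomial i.
rewrite exprS; apply: clearedM IHk.
by exists q, 1%N => y cy; rewrite e // fevalX.
Qed.

Context {y0 : 'I_n -> K}.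
Hypotheses (y0_c : feval y0 c != 0) (A_y0 : A y0 =1 fvar).

Lemma feval_generic_eq0 p : feval (A fvar) p = 0 -> p = 0.
Proof.
move=> Ap0; have [q [N clear]] := feval_clear_denominators p.
have fvar_c : feval fvar c != 0.
  by rewrite feval_fvar tofrac_eq0; apply: contraNneq y0_c => ->; rewrite rmorph0.
have q0 : q = 0.
  by apply/eqP; rewrite -tofrac_eq0 -feval_fvar clear // Ap0 mul0r.
have := clear y0 y0_c; rewrite q0 rmorph0 (eq_feval _ A_y0) feval_fvar => /esym/eqP.
by rewrite mulf_eq0 expf_eq0 (negbTE y0_c) andbF orbF tofrac_eq0 => /eqP.
Qed.

End InvertibleSubstitution.
End FractionSubstitution.

Section Generators.
Variable l : nat.
Local Notation NV := (NV l).
Local Notation KF := (KF l).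
Local Notation a := (alpha l).
Local Notation f := (fv l).

Definition alpha_idx (j : nat) : 'I_NV := inord (j %% l.+1)%N.
Definition fv_idx (j : nat) : 'I_NV := inord (l.+1 + j %% l.+1)%N.

Lemma alpha_fvar j : a j = fvar (alpha_idx j). Proof. by []. Qed.
Lemma fv_fvar j : f j = fvar (fv_idx j). Proof. by []. Qed.

Lemma fv_neq0 j : f j != 0.
Proof. by rewrite tofrac_eq0 mpolyX_neq0. Qed.

Lemma eqm_refl j : eqm l j j.
Proof. exact: eqxx. Qed.

Lemma eqm_modn j k : eqm l (j %% l.+1) k = eqm l j k.
Proof. by rewrite /eqm modn_mod. Qed.

Lemma alpha_modn j : a (j %% l.+1)%N = a j.
Proof. by rewrite /alpha modn_mod. Qed.
Lemma fv_modn j : f (j %% l.+1)%N = f j.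
Proof. by rewrite /fv modn_mod. Qed.
Lemma alpha_period : a l.+1 = a 0.
Proof. by rewrite /alpha modnn mod0n. Qed.
Lemma fv_period : f l.+1 = f 0.
Proof. by rewrite /fv modnn mod0n. Qed.

Lemma modn_lt j : (j %% l.+1 < l.+1)%N.
Proof. exact: ltn_pmod. Qed.

Lemma alpha_idxE j : alpha_idx j = (j %% l.+1)%N :> nat.
Proof.
have lt_NV : (j %% l.+1 < NV)%N by rewrite /Defs.NV; have := modn_lt j; lia.
exact: inordK lt_NV.
Qed.

Lemma fv_idxE j : fv_idx j = (l.+1 + j %% l.+1)%N :> nat.
Proof.
have lt_NV : (l.+1 + j %% l.+1 < NV)%N by rewrite /Defs.NV; have := modn_lt j; lia.
exact: inordK lt_NV.
Qed.

Lemma genimg_alpha_idx F G j : genimg l F G (alpha_idx j) = F (j %% l.+1)%N.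
Proof. by rewrite /genimg alpha_idxE modn_lt. Qed.

Lemma genimg_fv_idx F G j : genimg l F G (fv_idx j) = G (j %% l.+1)%N.
Proof. by rewrite /genimg fv_idxE ltnNge leq_addr /= addKn. Qed.

Lemma genimg_fvar F G :
    (forall j, j < l.+1 -> F j = a j)%N -> (forall j, j < l.+1 -> G j = f j)%N ->
  genimg l F G =1 fvar.
Proof.
move=> FE GE v; have lt_v2 : (v < l.+1 + l.+1)%N by [].
rewrite /genimg; case: ifP => lt_v.
  by rewrite FE // alpha_fvar; congr fvar; apply: val_inj => /=; rewrite alpha_idxE modn_small.
rewrite GE ?fv_fvar; last by move: lt_v; rewrite ltnNge => /negbFE; lia.
congr fvar; apply: val_inj => /=; rewrite fv_idxE modn_small; last by lia.
by move: lt_v; rewrite ltnNge => /negbFE; lia.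
Qed.

Lemma delta_rot i : delta l = \sum_(j < l.+1) a (i + j).
Proof.
rewrite /delta (reindex_inj (addrI (inZp i : 'I_l.+1))) /=.
by apply: eq_bigr => j _; rewrite /alpha modn_mod modnDml.
Qed.

End Generators.

Section SimpleReflection.
Variables l i : nat.
Local Notation eqm := (eqm l).

Definition s_point (y : 'I_(NV l) -> KF l) : 'I_(NV l) -> KF l :=
  let a j := y (alpha_idx l j) in let f j := y (fv_idx l j) in
  genimg l
    (fun j => if eqm j i then - a j
              else if eqm j i.+1 || eqm j (i + l)%N then a j + a i else a j)
    (fun j => if eqm j i then f j else if eqm j i.+1 then f j + a i / f i
              else if eqm j (i + l)%N then f j - a i / f i else f j).

Lemma s_point_alpha j : s_point fvar (alpha_idx l j) = s_alpha l i j.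
Proof.
by rewrite /s_point genimg_alpha_idx /s_alpha !eqm_modn -!alpha_fvar !alpha_modn.
Qed.

Lemma s_point_fv j : s_point fvar (fv_idx l j) = s_f l i j.
Proof.
by rewrite /s_point genimg_fv_idx /s_f !eqm_modn -!alpha_fvar -!fv_fvar !fv_modn.
Qed.

Lemma s_point_involutive : s_point (s_point fvar) =1 fvar.
Proof.
apply: genimg_fvar => j _; rewrite !s_point_alpha ?s_point_fv /s_alpha /s_f eqm_refl.
  case: (eqm j i); first by rewrite opprK.
  by case: (_ || _); rewrite ?addrK.
case: (eqm j i) => //; case: (eqm j i.+1); first by rewrite mulNr addrK.
by case: (eqm j (i + l)) => //; rewrite mulNr opprK subrK.
Qed.

Lemma s_point_polynomial v : exists q, forall y,
  feval y 'X_(fv_idx l i) != 0 -> feval y q = s_point y v * feval y 'X_(fv_idx l i).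
Proof.
pose X k := 'X_k : {mpoly CC[NV l]}.
pose ai := X (alpha_idx l i); pose fi := X (fv_idx l i).
rewrite /s_point /genimg /=; case: (v < l.+1)%N.
  case: (eqm v i); first by exists (- X (alpha_idx l v) * fi) => y _; rewrite !rmorphM rmorphN /= !fevalX.
  case: (_ || _); last by exists (X (alpha_idx l v) * fi) => y _; rewrite !rmorphM /= !fevalX.
  by exists ((X (alpha_idx l v) + ai) * fi) => y _; rewrite !rmorphM rmorphD /= !fevalX.
set k := (v - l.+1)%N; pose fk := X (fv_idx l k).
case: (eqm k i); first by exists (fk * fi) => y _; rewrite !rmorphM /= !fevalX.
case: (eqm k i.+1).
  exists (fk * fi + ai) => y.
  by rewrite rmorphD rmorphM /= !fevalX => fi0; rewrite mulrDl divfK.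
case: (eqm k (i + l)); last by exists (fk * fi) => y _; rewrite !rmorphM /= !fevalX.
exists (fk * fi - ai) => y.
by rewrite rmorphB rmorphM /= !fevalX => fi0; rewrite mulrBl divfK.
Qed.

Lemma s_feval_eq0 p : feval (genimg l (s_alpha l i) (s_f l i)) p = 0 -> p = 0.
Proof.
apply: (feval_generic_eq0 s_point_polynomial _ s_point_involutive).
by rewrite fevalX s_point_fv /s_f eqm_refl fv_neq0.
Qed.

HB.instance Definition _ := GRing.isZmodMorphism.Build (KF l) (KF l) (s l i)
  (fsubst_is_zmod_morphism s_feval_eq0).
HB.instance Definition _ := GRing.isMonoidMorphism.Build (KF l) (KF l) (s l i)
  (fsubst_is_monoid_morphism s_feval_eq0).

Lemma s_alphaE j : s l i (alpha l j) = s_alpha l i j.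
Proof. by rewrite alpha_fvar [LHS](fsubst_fvar s_feval_eq0); exact: s_point_alpha. Qed.

Lemma s_fvE j : s l i (fv l j) = s_f l i j.
Proof. by rewrite fv_fvar [LHS](fsubst_fvar s_feval_eq0); exact: s_point_fv. Qed.

End SimpleReflection.

Section Rotation.
Variable l : nat.

Definition pi_point (y : 'I_(NV l) -> KF l) : 'I_(NV l) -> KF l :=
  genimg l (fun j => y (alpha_idx l j.+1)) (fun j => y (fv_idx l j.+1)).

Definition pi_inverse_point : 'I_(NV l) -> KF l :=
  genimg l (fun j => alpha l (j + l)) (fun j => fv l (j + l)).

Lemma modn_succ_addn j : ((j.+1 %% l.+1 + l) %% l.+1 = j %% l.+1)%N.
Proof. by rewrite modnDml addSnnS modnDr. Qed.

Lemma pi_point_inverse : pi_point pi_inverse_point =1 fvar.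
Proof.
apply: genimg_fvar => j _; rewrite /pi_inverse_point.
  by rewrite genimg_alpha_idx /alpha modn_succ_addn.
by rewrite genimg_fv_idx /fv modn_succ_addn.
Qed.

Lemma pi_point_polynomial v : exists q, forall y,
  feval y 1 != 0 -> feval y q = pi_point y v * feval y 1.
Proof.
rewrite /pi_point /genimg; case: (v < l.+1)%N.
  by exists 'X_(alpha_idx l v.+1) => y _; rewrite rmorph1 mulr1 fevalX.
by exists 'X_(fv_idx l (v - l.+1).+1) => y _; rewrite rmorph1 mulr1 fevalX.
Qed.

Lemma pi_feval_eq0 p :
  feval (genimg l (fun j => alpha l j.+1) (fun j => fv l j.+1)) p = 0 -> p = 0.
Proof.
by apply: (feval_generic_eq0 pi_point_polynomial _ pi_point_inverse); rewrite rmorph1 oner_neq0.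
Qed.

HB.instance Definition _ := GRing.isZmodMorphism.Build (KF l) (KF l) (Defs.pi l)
  (fsubst_is_zmod_morphism pi_feval_eq0).
HB.instance Definition _ := GRing.isMonoidMorphism.Build (KF l) (KF l) (Defs.pi l)
  (fsubst_is_monoid_morphism pi_feval_eq0).

Lemma modn_succ j : ((j %% l.+1).+1 %% l.+1 = j.+1 %% l.+1)%N.
Proof. by rewrite -addn1 modnDml addn1. Qed.

Lemma pi_alpha j : Defs.pi l (alpha l j) = alpha l j.+1.
Proof.
by rewrite alpha_fvar [LHS](fsubst_fvar pi_feval_eq0) genimg_alpha_idx /alpha modn_succ.
Qed.

Lemma pi_fv j : Defs.pi l (fv l j) = fv l j.+1.
Proof.
by rewrite fv_fvar [LHS](fsubst_fvar pi_feval_eq0) genimg_fv_idx /fv modn_succ.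
Qed.

Lemma pi_delta : Defs.pi l (delta l) = delta l.
Proof.
rewrite [in LHS](delta_rot l 0) rmorph_sum /= (delta_rot l 1).
by apply: eq_bigr => j _; rewrite pi_alpha.
Qed.

End Rotation.

Section AffineWeylAction.
Variable l : nat.
Hypothesis l_ge2 : (2 <= l)%N.
Local Notation a := (alpha l).
Local Notation f := (fv l).
Local Notation s := (s l).
Local Notation eqm := (eqm l).

Lemma eqm_ltF j k : (j < k)%N -> (k < j + l.+1)%N -> eqm j k = false.
Proof.
move=> lt_jk lt_kj; rewrite /Defs.eqm -(subnKC (ltnW lt_jk)) -{1}[j]addn0 eqn_modDl.
by rewrite mod0n modn_small; lia.
Qed.

Lemma eqm_gtF j k : (k < j)%N -> (j < k + l.+1)%N -> eqm j k = false.
Proof. by move=> lt_kj lt_jk; rewrite /Defs.eqm eq_sym -/(eqm k j) eqm_ltF. Qed.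

Lemma s_gen_self m : s m (a m) = - a m /\ s m (f m) = f m.
Proof. by rewrite s_alphaE s_fvE /s_alpha /s_f eqm_refl. Qed.

Lemma s_gen_succ m : s m (a m.+1) = a m.+1 + a m /\ s m (f m.+1) = f m.+1 + a m / f m.
Proof. by rewrite s_alphaE s_fvE /s_alpha /s_f eqm_refl eqm_gtF //; lia. Qed.

Lemma s_gen_pred m :
  s m (a (m + l)) = a (m + l) + a m /\ s m (f (m + l)) = f (m + l) - a m / f m.
Proof.
rewrite s_alphaE s_fvE /s_alpha /s_f eqm_refl orbT.
by rewrite !eqm_gtF //; lia.
Qed.

Lemma s_gen_far m j : eqm j m = false -> eqm j m.+1 = false -> eqm j (m + l) = false ->
  s m (a j) = a j /\ s m (f j) = f j.
Proof. by move=> jm jm1 jml; rewrite s_alphaE s_fvE /s_alpha /s_f jm jm1 jml. Qed.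

Lemma s_gen_fixed_lt m j : (j.+2 <= m)%N -> (m < j + l)%N -> s m (a j) = a j /\ s m (f j) = f j.
Proof.
move=> lt_jm lt_mj; apply: s_gen_far; try by rewrite eqm_ltF //; lia.
rewrite (_ : m + l = m.-1 + l.+1)%N; last by lia.
by rewrite /Defs.eqm modnDr -/(eqm j m.-1) eqm_ltF //; lia.
Qed.

Lemma s_gen_fixed_gt m j : (m.+2 <= j)%N -> (j < m + l)%N -> s m (a j) = a j /\ s m (f j) = f j.
Proof.
move=> lt_mj lt_jm; apply: s_gen_far; try by rewrite eqm_gtF //; lia.
by rewrite eqm_ltF //; lia.
Qed.

Lemma s_gen_predn j : s j.+1 (a j) = a j + a j.+1 /\ s j.+1 (f j) = f j - a j.+1 / f j.+1.
Proof.
have [sa sf] := s_gen_pred j.+1.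
by rewrite addSnnS /alpha /fv modnDr -/(alpha l j) -/(fv l j) in sa sf.
Qed.

Lemma s_gen_wrap : s l (a 0) = a 0 + a l /\ s l (f 0) = f 0 + a l / f l.
Proof. by rewrite -alpha_period -fv_period; exact: s_gen_succ. Qed.

Lemma s_delta i : s i (delta l) = delta l.
Proof.
rewrite (delta_rot l i) rmorph_sum /= (sum_ord_split_ends (fun j => s i (a (i + j))) l_ge2).
rewrite (sum_ord_split_ends (fun j => a (i + j)) l_ge2) addn0 addn1.
rewrite (s_gen_self i).1 (s_gen_succ i).1 (s_gen_pred i).1.
rewrite (eq_big_nat _ _ (fun j lt_j => (s_gen_fixed_gt i (i + j) _ _).1)); try lia.
ring.
Qed.

Lemma s_sum_alpha k r : (r.+2 <= l)%N ->
  s (k + r.+1) (\sum_(i < r.+1) a (k + i)) = \sum_(i < r.+2) a (k + i).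
Proof.
move=> lt_rl; rewrite rmorph_sum /= big_ord_recr /= [RHS]big_ord_recr /= [in RHS]big_ord_recr /=.
rewrite -addrA addnS (s_gen_predn _).1; congr (_ + _).
by apply: eq_bigr => i _; apply: (s_gen_fixed_lt _ _ _ _).1; have := ltn_ord i; lia.
Qed.

#[local] Arguments cfrac : simpl never.

Lemma cfrac0 k : cfrac l k 0 = a k / f k.
Proof. by []. Qed.

Lemma cfracS k r : cfrac l k r.+1 = (\sum_(i < r.+2) a (k + i)) / (f k - cfrac l k.+1 r).
Proof. by []. Qed.

Lemma s_cfrac m k r : (k + r.+1)%N = m -> (r.+2 <= l)%N -> s m (cfrac l k r) = cfrac l k r.+1.
Proof.
elim: r k m => [|r IHr] k m <- lt_rl.
  rewrite cfracS !cfrac0 fmorph_div /= addn1 (s_gen_predn k).1 (s_gen_predn k).2.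
  by rewrite !big_ord_recr big_ord0 /= add0r addn0 addn1.
rewrite cfracS fmorph_div rmorphB /= s_sum_alpha // (IHr k.+1) ?addSnnS //; last by lia.
by rewrite (s_gen_fixed_lt _ _ _ _).2 //; lia.
Qed.

Lemma g_cfrac k r : (r <= l.-1)%N -> g l k r = cfrac l k r.
Proof.
elim: r => [|r IHr] lt_rl //=.
by rewrite IHr ?(s_cfrac (k + r.+1)) //; lia.
Qed.

Lemma pi_cfrac k r : Defs.pi l (cfrac l k r) = cfrac l k.+1 r.
Proof.
elim: r k => [|r IHr] k; first by rewrite !cfrac0 fmorph_div /= pi_alpha pi_fv.
rewrite !cfracS fmorph_div rmorphB rmorph_sum /= pi_fv IHr; congr (_ / _).
by apply: eq_bigr => i _; rewrite pi_alpha.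
Qed.

Lemma sprodS m x : sprod l m.+1 x = s m.+1 (sprod l m x).
Proof. by []. Qed.

Lemma sprod_pred m x : (0 < m)%N -> sprod l m x = s m (sprod l m.-1 x).
Proof. by case: m. Qed.

Lemma sprod_gen_fixed m j : (m.+2 <= j <= l)%N ->
  sprod l m (a j) = a j /\ sprod l m (f j) = f j.
Proof.
elim: m => [//|m IHm] lt_mj; rewrite !sprodS; have [-> ->] := IHm ltac:(lia).
by apply: s_gen_fixed_gt; lia.
Qed.

Lemma sprod_alpha0 m : (m <= l.-1)%N -> sprod l m (a 0) = \sum_(i < m.+1) a i.
Proof.
elim: m => [|m IHm] lt_ml; first by rewrite big_ord1.
by rewrite sprodS IHm ?(s_sum_alpha 0 m) //; lia.
Qed.

Lemma sprod_alpha1 m : (0 < m <= l)%N -> sprod l m (a 1) = - \sum_(i < m) a i.+1.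
Proof.
elim: m => [//|[|m] IHm] lt_ml; first by rewrite big_ord1 /= (s_gen_self 1).1.
rewrite sprodS IHm; last by lia.
by rewrite rmorphN /= (s_sum_alpha 1 m) //; lia.
Qed.

Lemma sprod_alpha_shift i m : (i.+2 <= m <= l)%N -> sprod l m (a i.+2) = a i.+1.
Proof.
elim: m => [//|m IHm] lt_im; have [->|lt_i] := eqVneq m i.+1.
  rewrite !sprodS (sprod_gen_fixed i i.+2 _).1; last by lia.
  by rewrite (s_gen_succ i.+1).1 rmorphD /= (s_gen_self i.+2).1 (s_gen_predn i.+1).1 addrC addrK.
by rewrite sprodS IHm ?(s_gen_fixed_lt _ _ _ _).1 //; lia.
Qed.

Lemma T1_alpha0 : T1 l (a 0) = a 0 + delta l.
Proof.
have sum_a : \sum_(i < l) a i = delta l - a l by rewrite /delta big_ord_recr addrK.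
rewrite /T1 (sprod_pred _ _ (ltnW l_ge2)) sprod_alpha0 ?prednK ?sum_a //; try lia.
by rewrite rmorphB /= s_delta (s_gen_self l).1 opprK rmorphD /= pi_delta pi_alpha alpha_period addrC.
Qed.

Lemma T1_alpha1 : T1 l (a 1) = a 1 - delta l.
Proof.
have sum_a : \sum_(i < l) a i.+1 = delta l - a 0 by rewrite /delta big_ord_recl addrAC subrr add0r.
rewrite /T1 sprod_alpha1 ?sum_a; last by lia.
by rewrite opprB rmorphB /= pi_delta pi_alpha.
Qed.

Lemma T1_alpha_fixed j : (2 <= j <= l)%N -> T1 l (a j) = a j.
Proof.
case: j => [//|[//|i]] lt_il.
by rewrite /T1 sprod_alpha_shift ?pi_alpha //; lia.
Qed.

Lemma sprod_fv0 m : (0 < m <= l.-1)%N -> sprod l m (f 0) = f 0 - cfrac l 1 m.-1.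
Proof.
elim: m => [//|[|m] IHm] lt_ml; first by rewrite /= (s_gen_predn 0).2.
rewrite sprodS IHm; last by lia.
by rewrite rmorphB /= (s_gen_fixed_lt _ _ _ _).2 ?(s_cfrac m.+2) //; lia.
Qed.

Lemma T1_fv0 : T1 l (f 0) = f 1 - g l 2 l.-1 + g l 0 0.
Proof.
rewrite /T1 (sprod_pred _ _ (ltnW l_ge2)) sprod_fv0; last by lia.
rewrite rmorphB /= s_gen_wrap.2 (s_cfrac l); [|lia|lia].
rewrite rmorphB rmorphD fmorph_div /= !pi_fv pi_alpha pi_cfrac alpha_period fv_period.
rewrite g_cfrac // (_ : l.-2.+1 = l.-1)%N; last by lia.
by rewrite addrAC.
Qed.

Lemma sprod_fv1 m : (2 <= m <= l)%N -> sprod l m (f 1) = f 1 - cfrac l 2 (m - 2).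
Proof.
elim: m => [//|[//|[|m]] IHm] lt_ml; first by rewrite /= (s_gen_self 1).2 (s_gen_predn 1).2.
rewrite sprodS IHm; last by lia.
rewrite rmorphB [LHS]/= (s_gen_fixed_lt _ _ _ _).2 ?(s_cfrac m.+3); try lia.
by rewrite (_ : m.+3 - 2 = (m.+2 - 2).+1)%N //; lia.
Qed.

Lemma T1_fv1 : T1 l (f 1) = f 2 - g l 3 (l - 2).
Proof.
rewrite /T1 sprod_fv1; last by lia.
by rewrite rmorphB /= pi_fv pi_cfrac g_cfrac //; lia.
Qed.

Lemma sprod_fv_mid i d : (i.+3 + d <= l)%N ->
  sprod l (i.+3 + d) (f i.+2) = f i.+2 + cfrac l i.+1 d.+2 - cfrac l i.+3 d.
Proof.
elim: d => [|d IHd] lt_dl.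
  rewrite addn0 !sprodS (sprod_gen_fixed i i.+2 _).2; last by lia.
  rewrite (s_gen_succ i.+1).2 -cfrac0.
  rewrite rmorphD /= (s_gen_self i.+2).2 (s_cfrac i.+2); [|lia|lia].
  rewrite rmorphD /= (s_gen_predn i.+2).2 (s_cfrac i.+3); [|lia|lia].
  by rewrite cfrac0 addrAC.
rewrite addnS sprodS IHd; last by lia.
rewrite rmorphB rmorphD /= (s_gen_fixed_lt _ _ _ _).2; [|lia|lia].
by rewrite (s_cfrac (i.+3 + d).+1 i.+1) ?(s_cfrac (i.+3 + d).+1 i.+3) //; lia.
Qed.

Lemma T1_fv_mid j : (2 <= j <= l.-1)%N ->
  T1 l (f j) = f j.+1 - g l j.+2 (l.-1 - j) + g l j (l.+1 - j).
Proof.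
case: j => [//|[//|i]] lt_il.
have := sprod_fv_mid i (l - i.+3) ltac:(lia).
rewrite (_ : i.+3 + (l - i.+3) = l)%N; last by lia.
rewrite /T1 => ->; rewrite rmorphB rmorphD /= pi_fv !pi_cfrac !g_cfrac; [|lia|lia].
have -> : (l.-1 - i.+2 = l - i.+3)%N by lia.
have -> : (l.+1 - i.+2 = (l - i.+3).+2)%N by lia.
by rewrite addrAC.
Qed.

Lemma T1_fvl : T1 l (f l) = f 0 + g l l 1.
Proof.
have succ_pred : l.-1.+1 = l by lia.
rewrite /T1 (sprod_pred _ _ (ltnW l_ge2)) (sprod_pred l.-1); last by lia.
rewrite (sprod_gen_fixed l.-2 l _).2; last by lia.
have := (s_gen_succ l.-1).2; rewrite succ_pred => ->.
rewrite -cfrac0 rmorphD [LHS]/= (s_gen_self l).2 (s_cfrac l l.-1 0); [|lia|lia].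
by rewrite rmorphD [LHS]/= pi_fv pi_cfrac fv_period succ_pred g_cfrac //; lia.
Qed.

End AffineWeylAction.

Theorem mainTheorem5 (l : nat) (hl : (2 <= l)%N) :
  (forall k r : nat, (k <= l)%N -> (r <= l.-1)%N -> g l k r = cfrac l k r) /\
  T1 l (fv l 0) = fv l 1 - g l 2 l.-1 + g l 0 0 /\
  T1 l (fv l 1) = fv l 2 - g l 3 (l - 2) /\
  (forall j : nat, (2 <= j <= l.-1)%N ->
     T1 l (fv l j) = fv l j.+1 - g l j.+2 (l.-1 - j) + g l j (l.+1 - j)) /\
  T1 l (fv l l) = fv l 0 + g l l 1 /\
  T1 l (alpha l 0) = alpha l 0 + delta l /\
  T1 l (alpha l 1) = alpha l 1 - delta l /\
  (forall j : nat, (j <= l)%N -> j != 0%N -> j != 1%N -> T1 l (alpha l j) = alpha l j).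
Proof.
split; first by move=> k r _; exact: g_cfrac.
split; first exact: T1_fv0.
split; first exact: T1_fv1.
split; first exact: T1_fv_mid.
split; first exact: T1_fvl.
split; first exact: T1_alpha0.
split; first exact: T1_alpha1.
by move=> [|[|j]] // le_jl _ _; apply: T1_alpha_fixed.
Qed.
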